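(* Let $F_n\colon[0,+\infty)^2\to[0,+\infty)$, $n=1,2,\dots$, be functions converging uniformly on compact sets to a continuous function $F$. Then the following are equivalent: (1) for every $s,t\ge0$, $\lim_{n\to\infty}\big(F_n(s,t)-\inf_{s\le s',\,t\le t'}F_n(s',t')\big)=0$; (2) for every $D>0$, $\lim_{n\to\infty}\sup_{0\le s,t\le D}\big(F_n(s,t)-\inf_{s\le s',\,t\le t'}F_n(s',t')\big)=0$. *)

From Stdlib Require Import Reals Lra ClassicalEpsilon.
Open Scope R_scope.

Definition is_lower_bound (E : R -> Prop) (m : R) : Prop :=
  forall x, E x -> m <= x.
Definition is_glb (E : R -> Prop) (m : R) : Prop :=
  is_lower_bound E m /\ (forall b, is_lower_bound E b -> b <= m).

(* inf and sup of a set of reals (meaningful when they exist; chosen by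
   classical choice, arbitrary otherwise) *)
Definition Inf (E : R -> Prop) : R := epsilon (inhabits 0) (fun m => is_glb E m).
Definition Sup (E : R -> Prop) : R := epsilon (inhabits 0) (fun m => is_lub E m).

Definition upper_inf (f : R -> R -> R) (s t : R) : R :=
  Inf (fun y => exists s' t', s <= s' /\ t <= t' /\ y = f s' t').

Definition gap (f : R -> R -> R) (s t : R) : R := f s t - upper_inf f s t.

Definition sup_gap (f : R -> R -> R) (D : R) : R :=
  Sup (fun y => exists s t, 0 <= s <= D /\ 0 <= t <= D /\ y = gap f s t).

Definition continuous_on_quadrant (F : R -> R -> R) : Prop :=
  forall s t, 0 <= s -> 0 <= t -> forall eps, 0 < eps ->
    exists delta, 0 < delta /\
      forall s' t', 0 <= s' -> 0 <= t' -> Rabs (s' - s) < delta -> Rabs (t' - t) < delta ->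
        Rabs (F s' t' - F s t) < eps.

(* uniform convergence on compact subsets of [0,+oo)^2 (every compact subset
   is contained in some square [0,D]^2) *)
Definition unif_cv_compact (Fn : nat -> R -> R -> R) (F : R -> R -> R) : Prop :=
  forall D, 0 < D -> forall eps, 0 < eps -> exists N : nat, forall n : nat, (N <= n)%nat ->
    forall s t, 0 <= s <= D -> 0 <= t <= D -> Rabs (Fn n s t - F s t) < eps.

(* Continuity of the limit F makes the gap condition uniform.  By compactness the
   square [0,D]^2 is covered by finitely many small neighbourhoods, and each one
   has an anchor point below-left of all its points at which F differs from its
   values there by less than eps.  Since [upper_inf] is monotone, the gap of F_n
   at (s,t) exceeds the gap at the anchor by at most F_n(s,t) - F_n(anchor),
   which is small for large n by uniform convergence; the gaps at the finitely
   many anchors vanish simultaneously by (1).  The converse only needs the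
   suprema to be taken over bounded sets, which holds since 0 <= gap <= F_n. *)

From Stdlib Require Import Reals Lra Lia List Classical ClassicalEpsilon.
From Coquelicot Require Import Coquelicot.
Open Scope R_scope.

Lemma Inf_is_glb (E : R -> Prop) :
  (exists x, E x) -> (exists m, is_lower_bound E m) -> is_glb E (Inf E).
Proof.
  intros [x0 Ex0] [m Hm]. unfold Inf. apply epsilon_spec.
  destruct (completeness (fun x => E (- x))) as [l [Hub Hleast]].
  - exists (- m). intros y Ey. specialize (Hm _ Ey). lra.
  - exists (- x0). now rewrite Ropp_involutive.
  - exists (- l). split.
    + intros y Ey. assert (E (- - y)) as Ey' by now rewrite Ropp_involutive.
      specialize (Hub _ Ey'). lra.
    + intros b Hb. enough (l <= - b) by lra.
      apply Hleast. intros y Ey. specialize (Hb _ Ey). lra.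
Qed.

Lemma Sup_is_lub (E : R -> Prop) : (exists x, E x) -> bound E -> is_lub E (Sup E).
Proof.
  intros Hne Hb. unfold Sup. apply epsilon_spec.
  destruct (completeness E Hb Hne) as [l Hl]. now exists l.
Qed.

Section UpperInf.
Variable f : R -> R -> R.
Hypothesis f_ge0 : forall s t, 0 <= s -> 0 <= t -> 0 <= f s t.

Lemma upper_inf_is_glb s t : 0 <= s -> 0 <= t ->
  is_glb (fun y => exists s' t', s <= s' /\ t <= t' /\ y = f s' t') (upper_inf f s t).
Proof.
  intros hs ht. apply Inf_is_glb.
  - exists (f s t), s, t. repeat split; lra.
  - exists 0. intros y (s' & t' & h1 & h2 & ->). apply f_ge0; lra.
Qed.

Lemma upper_inf_le s t s' t' : 0 <= s -> 0 <= t -> s <= s' -> t <= t' ->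
  upper_inf f s t <= f s' t'.
Proof.
  intros hs ht h1 h2. apply (proj1 (upper_inf_is_glb s t hs ht)). now exists s', t'.
Qed.

Lemma upper_inf_ge0 s t : 0 <= s -> 0 <= t -> 0 <= upper_inf f s t.
Proof.
  intros hs ht. apply (proj2 (upper_inf_is_glb s t hs ht)).
  intros y (s' & t' & h1 & h2 & ->). apply f_ge0; lra.
Qed.

Lemma upper_inf_monotone a b s t : 0 <= a -> 0 <= b -> a <= s -> b <= t ->
  upper_inf f a b <= upper_inf f s t.
Proof.
  intros ha hb hs ht. apply (proj2 (upper_inf_is_glb s t ltac:(lra) ltac:(lra))).
  intros y (s' & t' & h1 & h2 & ->). apply upper_inf_le; lra.
Qed.

Lemma gap_ge0 s t : 0 <= s -> 0 <= t -> 0 <= gap f s t.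
Proof. intros hs ht. unfold gap. pose proof (upper_inf_le s t s t hs ht). lra. Qed.

Lemma gap_le s t : 0 <= s -> 0 <= t -> gap f s t <= f s t.
Proof. intros hs ht. unfold gap. pose proof (upper_inf_ge0 s t hs ht). lra. Qed.

Lemma gap_le_gap_below a b s t : 0 <= a -> 0 <= b -> a <= s -> b <= t ->
  gap f s t <= gap f a b + (f s t - f a b).
Proof. intros. unfold gap. pose proof (upper_inf_monotone a b s t). lra. Qed.

Lemma sup_gap_is_lub D B : 0 <= D ->
  (forall s t, 0 <= s <= D -> 0 <= t <= D -> gap f s t <= B) ->
  is_lub (fun y => exists s t, 0 <= s <= D /\ 0 <= t <= D /\ y = gap f s t)
         (sup_gap f D).
Proof.
  intros hD hB. apply Sup_is_lub.
  - exists (gap f 0 0), 0, 0. repeat split; lra.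
  - exists B. intros y (s & t & hs & ht & ->). now apply hB.
Qed.

Lemma gap_le_sup_gap D B s t : 0 <= s <= D -> 0 <= t <= D ->
  (forall s t, 0 <= s <= D -> 0 <= t <= D -> gap f s t <= B) ->
  gap f s t <= sup_gap f D.
Proof.
  intros hs ht hB. apply (proj1 (sup_gap_is_lub D B ltac:(lra) hB)). now exists s, t.
Qed.

Lemma sup_gap_bounds D B : 0 <= D ->
  (forall s t, 0 <= s <= D -> 0 <= t <= D -> gap f s t <= B) ->
  0 <= sup_gap f D <= B.
Proof.
  intros hD hB. split.
  - apply Rle_trans with (gap f 0 0); [apply gap_ge0; lra|].
    apply (gap_le_sup_gap D B); auto; lra.
  - apply (proj2 (sup_gap_is_lub D B hD hB)).
    intros y (s & t & hs & ht & ->). now apply hB.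
Qed.

End UpperInf.

Lemma eventually_forall_In {A} (P : nat -> A -> Prop) (l : list A) :
  (forall a, In a l -> exists N, forall n, (N <= n)%nat -> P n a) ->
  exists N, forall n, (N <= n)%nat -> forall a, In a l -> P n a.
Proof.
  induction l as [|x l IH]; intros H.
  - exists 0%nat. intros n _ a [].
  - destruct (H x (or_introl eq_refl)) as [N1 HN1].
    destruct IH as [N2 HN2]; [intros a Ha; apply H; now right|].
    exists (Nat.max N1 N2). intros n Hn a [<-|Ha].
    + apply HN1. lia.
    + apply HN2; [lia|exact Ha].
Qed.

Lemma list_upper_bound {A} (g : A -> R) (l : list A) :
  exists M, forall a, In a l -> g a <= M.
Proof.
  induction l as [|x l [M HM]].
  - exists 0. intros a [].
  - exists (Rmax (g x) M). intros a [<-|Ha].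
    + apply Rmax_l.
    + eapply Rle_trans; [now apply HM | apply Rmax_r].
Qed.

Section ContinuousOnSquare.
Variable F : R -> R -> R.
Hypothesis F_cont : continuous_on_quadrant F.

Lemma continuity_modulus eps : 0 < eps ->
  exists delta : R * (R * unit) -> posreal, forall u v, 0 <= u -> 0 <= v ->
    forall s t, 0 <= s -> 0 <= t ->
      Rabs (s - u) < delta (u, (v, tt)) -> Rabs (t - v) < delta (u, (v, tt)) ->
      Rabs (F s t - F u v) < eps.
Proof.
  intros Heps.
  destruct (choice (fun (p : R * (R * unit)) (d : posreal) =>
    0 <= fst p -> 0 <= fst (snd p) -> forall s t, 0 <= s -> 0 <= t ->
      Rabs (s - fst p) < d -> Rabs (t - fst (snd p)) < d ->
      Rabs (F s t - F (fst p) (fst (snd p))) < eps)) as [delta Hdelta].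
  - intros [u [v []]]; simpl.
    destruct (Rle_dec 0 u) as [hu|hu]; [destruct (Rle_dec 0 v) as [hv|hv]|].
    + destruct (F_cont u v hu hv eps Heps) as [d [hd Hd]].
      now exists (mkposreal d hd).
    + exists (mkposreal 1 Rlt_0_1). intros _ hv'. contradiction.
    + exists (mkposreal 1 Rlt_0_1). intros hu'. contradiction.
  - exists delta. intros u v hu hv. exact (Hdelta (u, (v, tt)) hu hv).
Qed.

Lemma lower_corner_spec u d s : 0 < d -> 0 <= s -> Rabs (s - u) < d / 2 ->
  0 <= Rmax 0 (u - d / 2) <= s /\ Rabs (Rmax 0 (u - d / 2) - u) < d.
Proof.
  intros hd hs h. apply Rabs_def2 in h.
  unfold Rmax; destruct (Rle_dec 0 (u - d / 2)); repeat split; try lra;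
    apply Rabs_def1; lra.
Qed.

Lemma lower_anchors D eps : 0 < eps ->
  exists l : list (R * R), (forall a b, In (a, b) l -> 0 <= a /\ 0 <= b) /\
    forall s t, 0 <= s <= D -> 0 <= t <= D ->
      exists a b, In (a, b) l /\ a <= s /\ b <= t /\ Rabs (F s t - F a b) < eps.
Proof.
  intros Heps.
  destruct (continuity_modulus (eps / 2) ltac:(lra)) as [delta Hdelta].
  pose (corner := fun p : R * (R * unit) =>
    (Rmax 0 (fst p - delta p / 2), Rmax 0 (fst (snd p) - delta p / 2))).
  apply NNPP. intro Hneg.
  apply (compactness_list 2 (0, (0, tt)) (D, (D, tt))
           (fun p => pos_div_2 (delta p))).
  intros [l Hl]. apply Hneg. exists (map corner l). split.
  - intros a b Hin. apply in_map_iff in Hin as (p & Hp & _).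
    injection Hp as <- <-. split; apply Rmax_l.
  - intros s t hs ht.
    destruct (Hl (s, (t, tt))) as ([u [v []]] & Hin & Huv & Hclose); [simpl; tauto|].
    simpl in Huv, Hclose.
    pose proof (cond_pos (delta (u, (v, tt)))) as hd.
    destruct (lower_corner_spec u _ s hd ltac:(lra) ltac:(tauto)) as [ha ha'].
    destruct (lower_corner_spec v _ t hd ltac:(lra) ltac:(tauto)) as [hb hb'].
    exists (Rmax 0 (u - delta (u, (v, tt)) / 2)), (Rmax 0 (v - delta (u, (v, tt)) / 2)).
    split; [exact (in_map corner l _ Hin)|].
    assert (Hst : Rabs (F s t - F u v) < eps / 2)
      by (apply Hdelta; lra || (rewrite Rabs_minus_sym; tauto)).
    assert (Hab : Rabs (F (Rmax 0 (u - delta (u, (v, tt)) / 2))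
                          (Rmax 0 (v - delta (u, (v, tt)) / 2)) - F u v) < eps / 2)
      by (apply Hdelta; lra).
    apply Rabs_def2 in Hst, Hab. repeat split; try lra. apply Rabs_def1; lra.
Qed.

Lemma continuous_bounded_on_square D :
  exists M, forall s t, 0 <= s <= D -> 0 <= t <= D -> F s t <= M.
Proof.
  destruct (lower_anchors D 1 Rlt_0_1) as [l [_ Hl]].
  destruct (list_upper_bound (fun p => F (fst p) (snd p) + 1) l) as [M HM].
  exists M. intros s t hs ht.
  destruct (Hl s t hs ht) as (a & b & Hin & _ & _ & Hab).
  specialize (HM _ Hin). simpl in HM. apply Rabs_def2 in Hab. lra.
Qed.

End ContinuousOnSquare.

Section GapConvergence.
Variables (Fn : nat -> R -> R -> R) (F : R -> R -> R).
Hypothesis Fn_ge0 : forall n s t, 0 <= s -> 0 <= t -> 0 <= Fn n s t.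
Hypothesis Fn_cv : unif_cv_compact Fn F.
Hypothesis F_cont : continuous_on_quadrant F.

Lemma Un_cv_0_of_bounds (u : nat -> R) :
  (forall eps, 0 < eps -> exists N, forall n, (N <= n)%nat -> 0 <= u n < eps) ->
  Un_cv u 0.
Proof.
  intros H eps Heps. destruct (H eps Heps) as [N HN]. exists N. intros n Hn.
  unfold R_dist. rewrite Rminus_0_r. specialize (HN n Hn). apply Rabs_def1; lra.
Qed.

Lemma sup_gap_cv_of_gap_cv :
  (forall s t, 0 <= s -> 0 <= t -> Un_cv (fun n => gap (Fn n) s t) 0) ->
  forall D, 0 < D -> Un_cv (fun n => sup_gap (Fn n) D) 0.
Proof.
  intros Hgap D HD. apply Un_cv_0_of_bounds. intros eps Heps.
  pose (e := eps / 5).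
  destruct (lower_anchors F F_cont D e ltac:(unfold e; lra)) as [l [Hl0 Hl]].
  destruct (eventually_forall_In (fun n p => gap (Fn n) (fst p) (snd p) < e) l)
    as [N1 HN1].
  { intros [a b] Hin. destruct (Hl0 a b Hin) as [ha hb].
    destruct (Hgap a b ha hb e ltac:(unfold e; lra)) as [N HN].
    exists N. intros n Hn. specialize (HN n Hn).
    unfold R_dist in HN. rewrite Rminus_0_r in HN. apply Rabs_def2 in HN. simpl; lra. }
  destruct (Fn_cv D HD e ltac:(unfold e; lra)) as [N2 HN2].
  exists (Nat.max N1 N2). intros n Hn.
  enough (0 <= sup_gap (Fn n) D <= 4 * e) by (unfold e in *; lra).
  apply sup_gap_bounds; [apply Fn_ge0 | lra |].
  intros s t hs ht.
  destruct (Hl s t hs ht) as (a & b & Hin & has & hbt & HF).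
  destruct (Hl0 a b Hin) as [ha hb].
  pose proof (HN1 n ltac:(lia) _ Hin) as Hanchor. simpl in Hanchor.
  pose proof (gap_le_gap_below (Fn n) (Fn_ge0 n) a b s t ha hb has hbt).
  pose proof (HN2 n ltac:(lia) s t hs ht) as Hst.
  pose proof (HN2 n ltac:(lia) a b ltac:(lra) ltac:(lra)) as Hab.
  apply Rabs_def2 in HF, Hst, Hab. lra.
Qed.

Lemma gap_cv_of_sup_gap_cv :
  (forall D, 0 < D -> Un_cv (fun n => sup_gap (Fn n) D) 0) ->
  forall s t, 0 <= s -> 0 <= t -> Un_cv (fun n => gap (Fn n) s t) 0.
Proof.
  intros Hsup s t hs ht. apply Un_cv_0_of_bounds. intros eps Heps.
  set (D := Rmax 1 (Rmax s t)).
  assert (hD : 1 <= D /\ s <= D /\ t <= D).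
  { unfold D. pose proof (Rmax_l s t). pose proof (Rmax_r s t).
    pose proof (Rmax_l 1 (Rmax s t)). pose proof (Rmax_r 1 (Rmax s t)). lra. }
  destruct (continuous_bounded_on_square F F_cont D) as [M HM].
  destruct (Fn_cv D ltac:(lra) 1 Rlt_0_1) as [N0 HN0].
  destruct (Hsup D ltac:(lra) eps Heps) as [N1 HN1].
  exists (Nat.max N0 N1). intros n Hn.
  specialize (HN1 n ltac:(lia)). unfold R_dist in HN1. rewrite Rminus_0_r in HN1.
  apply Rabs_def2 in HN1.
  assert (Hbound : forall s' t', 0 <= s' <= D -> 0 <= t' <= D -> gap (Fn n) s' t' <= M + 1).
  { intros s' t' h1 h2.
    pose proof (gap_le (Fn n) (Fn_ge0 n) s' t' ltac:(lra) ltac:(lra)).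
    specialize (HN0 n ltac:(lia) s' t' h1 h2). apply Rabs_def2 in HN0.
    specialize (HM s' t' h1 h2). lra. }
  pose proof (gap_ge0 (Fn n) (Fn_ge0 n) s t hs ht).
  pose proof (gap_le_sup_gap (Fn n) D (M + 1) s t ltac:(lra) ltac:(lra) Hbound).
  lra.
Qed.

End GapConvergence.

Theorem mainTheorem17 (Fn : nat -> R -> R -> R) (F : R -> R -> R)
  (Hpos : forall n s t, 0 <= s -> 0 <= t -> 0 <= Fn n s t)
  (Hcv : unif_cv_compact Fn F)
  (Hcont : continuous_on_quadrant F) :
  (forall s t, 0 <= s -> 0 <= t -> Un_cv (fun n => gap (Fn n) s t) 0) <->
  (forall D, 0 < D -> Un_cv (fun n => sup_gap (Fn n) D) 0).
Proof.
  split.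
  - exact (sup_gap_cv_of_gap_cv Fn F Hpos Hcv Hcont).
  - exact (gap_cv_of_sup_gap_cv Fn F Hpos Hcv Hcont).
Qed.
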